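(* The variety $\mathsf{KA}$ of Kleene algebras is 1ESP.
   Context: $\mathsf{KA}$ is the variety of Kleene algebras: bounded distributive lattices $(A,\wedge,\vee,0,1)$ with a unary operation $\neg$ satisfying $\neg\neg x\approx x$, $x\wedge y\approx\neg(\neg x\vee\neg y)$, and $x\wedge\neg x\le y\vee\neg y$. An algebra is projective in a variety $\mathsf V$ iff it is a retract of a free algebra of $\mathsf V$; exact in $\mathsf V$ if isomorphic to a finitely generated subalgebra of a finitely generated free algebra of $\mathsf V$. An algebra $\mathbf S$ is strongly projective in $\mathsf V$ if it is projective and, for every embedding $i:\mathbf S\to\mathbf P$ into an algebra $\mathbf P$ projective in $\mathsf V$, there is a homomorphism $j:\mathbf P\to\mathbf S$ with $j\circ i=\mathrm{id}_{\mathbf S}$. A variety is 1ESP if all its 1-generated exact algebras are strongly projective. *)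

From mathcomp Require Import ssreflect ssrfun ssrbool eqtype ssrnat fintype.

Set Implicit Arguments.
Unset Strict Implicit.

Record KA := {
  ka_car :> Type;
  ka_meet : ka_car -> ka_car -> ka_car;
  ka_join : ka_car -> ka_car -> ka_car;
  ka_zero : ka_car;
  ka_one : ka_car;
  ka_neg : ka_car -> ka_car;
  ka_meetA : forall x y z, ka_meet x (ka_meet y z) = ka_meet (ka_meet x y) z;
  ka_joinA : forall x y z, ka_join x (ka_join y z) = ka_join (ka_join x y) z;
  ka_meetC : forall x y, ka_meet x y = ka_meet y x;
  ka_joinC : forall x y, ka_join x y = ka_join y x;
  ka_meetKU : forall x y, ka_meet x (ka_join x y) = x;
  ka_joinKI : forall x y, ka_join x (ka_meet x y) = x;
  ka_meetUr : forall x y z,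
      ka_meet x (ka_join y z) = ka_join (ka_meet x y) (ka_meet x z);
  ka_join0 : forall x, ka_join ka_zero x = x;
  ka_meet1 : forall x, ka_meet ka_one x = x;
  ka_negK : forall x, ka_neg (ka_neg x) = x;
  ka_meet_neg : forall x y, ka_meet x y = ka_neg (ka_join (ka_neg x) (ka_neg y));
  ka_kleene : forall x y,
      (* x /\ neg x <= y \/ neg y, with a <= b iff a /\ b = a *)
      ka_meet (ka_meet x (ka_neg x)) (ka_join y (ka_neg y))
      = ka_meet x (ka_neg x)
}.

Definition is_hom (A B : KA) (f : A -> B) : Prop :=
  (forall x y, f (ka_meet x y) = ka_meet (f x) (f y)) /\
  (forall x y, f (ka_join x y) = ka_join (f x) (f y)) /\
  f (ka_zero A) = ka_zero B /\
  f (ka_one A) = ka_one B /\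
  (forall x, f (ka_neg x) = ka_neg (f x)).

Definition is_embedding (A B : KA) (f : A -> B) : Prop :=
  is_hom f /\ injective f.

Definition ka_closed (A : KA) (P : A -> Prop) : Prop :=
  (forall x y, P x -> P y -> P (ka_meet x y)) /\
  (forall x y, P x -> P y -> P (ka_join x y)) /\
  P (ka_zero A) /\ P (ka_one A) /\
  (forall x, P x -> P (ka_neg x)).

Definition generated_by (A : KA) (G : A -> Prop) : Prop :=
  forall P : A -> Prop, ka_closed P -> (forall x, G x -> P x) -> forall x, P x.

Definition finitely_generated (A : KA) : Prop :=
  exists (m : nat) (h : 'I_m -> A), generated_by (fun x => exists i, h i = x).

Definition one_generated (A : KA) : Prop :=
  exists a : A, generated_by (fun x => x = a).

Definition is_free (X : Type) (F : KA) (g : X -> F) : Prop :=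
  forall (B : KA) (f : X -> B),
    exists h : F -> B, is_hom h /\ (forall x, h (g x) = f x) /\
      (forall h' : F -> B, is_hom h' -> (forall x, h' (g x) = f x) ->
         forall y, h' y = h y).

Definition is_retract (A B : KA) : Prop :=
  exists (s : A -> B) (r : B -> A), is_hom s /\ is_hom r /\ forall a, r (s a) = a.

Definition projective (A : KA) : Prop :=
  exists (X : Type) (F : KA) (g : X -> F), is_free g /\ is_retract A F.

(* Exact in KA: isomorphic to a finitely generated subalgebra of a finitely
   generated free algebra, i.e. finitely generated and embeddable into a free
   algebra on finitely many generators. *)
Definition exact (A : KA) : Prop :=
  finitely_generated A /\
  exists (n : nat) (F : KA) (g : 'I_n -> F) (e : A -> F),
    is_free g /\ is_embedding e.

Definition strongly_projective (S : KA) : Prop :=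
  projective S /\
  forall (P : KA) (i : S -> P), projective P -> is_embedding i ->
    exists j : P -> S, is_hom j /\ forall s, j (i s) = s.

Definition KA_1ESP : Prop :=
  forall S : KA, one_generated S -> exact S -> strongly_projective S.

(* Every Kleene algebra is separated by its homomorphisms into the three-element
   Kleene algebra K3 = {0 < m < 1} (prime filter theorem, plus Kalman's pairing of
   a prime filter with its dual), and the term operations of K3 are monotone for
   the information order, in which m lies below the crisp values 0 and 1.
   Let S be generated by a and embedded in a free algebra F by phi. For c = 0, 1
   pick, when there is one, a homomorphism F -> K3 sending phi a to c and round its
   generator values to crisp ones: by monotonicity, every homomorphism with these
   crisp generator values still sends phi a to c. Sending each generator to the
   unary term of a whose K3-operation maps 0 and 1 to the two recorded crisp values
   defines J : F -> S such that k (phi (J (phi a))) = k (phi a) for every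
   k : F -> K3; hence J (phi a) = a and J \o phi is the identity. Composing with a
   retraction of a free algebra onto a projective one splits every embedding of S
   into a projective algebra. *)

From mathcomp Require Import ssreflect ssrfun ssrbool eqtype ssrnat fintype.
From mathcomp Require Import boolp classical_sets.

Set Implicit Arguments.
Unset Strict Implicit.
Unset Printing Implicit Defensive.

Local Notation "x ⊓ y" := (ka_meet x y) (at level 40, left associativity).
Local Notation "x ⊔ y" := (ka_join x y) (at level 50, left associativity).
Local Notation "¬ x" := (ka_neg x) (at level 35, right associativity).

Definition ka_le (A : KA) (x y : A) : Prop := x ⊓ y = x.
Local Notation "x ≤ y" := (ka_le x y) (at level 70, no associativity).

Section Lattice.
Variable A : KA.
Implicit Types x y z : A.

Lemma meetxx x : x ⊓ x = x.
Proof. by rewrite -{2}(ka_joinKI x x) ka_meetKU. Qed.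

Lemma meetUl x y z : (x ⊔ y) ⊓ z = x ⊓ z ⊔ y ⊓ z.
Proof. by rewrite ka_meetC ka_meetUr !(ka_meetC z). Qed.

Lemma meet0x x : ka_zero A ⊓ x = ka_zero A.
Proof. by rewrite -{1}(ka_join0 x) ka_meetKU. Qed.

Lemma join1x x : ka_one A ⊔ x = ka_one A.
Proof. by rewrite -{1}(ka_meet1 x) ka_joinKI. Qed.

Lemma negU x y : ¬ (x ⊔ y) = ¬ x ⊓ ¬ y.
Proof. by rewrite ka_meet_neg !ka_negK. Qed.

Lemma negI x y : ¬ (x ⊓ y) = ¬ x ⊔ ¬ y.
Proof. by rewrite ka_meet_neg ka_negK. Qed.

Lemma neg0 : ¬ ka_zero A = ka_one A.
Proof. by rewrite -(meet0x (¬ ka_one A)) negI ka_negK ka_joinC join1x. Qed.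

Lemma neg1 : ¬ ka_one A = ka_zero A.
Proof. by rewrite -neg0 ka_negK. Qed.

Lemma le_refl x : x ≤ x.
Proof. exact: meetxx. Qed.

Lemma le_trans x y z : x ≤ y -> y ≤ z -> x ≤ z.
Proof. by rewrite /ka_le => xy yz; rewrite -xy -ka_meetA yz. Qed.

Lemma le_anti x y : x ≤ y -> y ≤ x -> x = y.
Proof. by rewrite /ka_le => xy yx; rewrite -xy ka_meetC yx. Qed.

Lemma le0x x : ka_zero A ≤ x.
Proof. exact: meet0x. Qed.

Lemma lex1 x : x ≤ ka_one A.
Proof. by rewrite /ka_le ka_meetC ka_meet1. Qed.

Lemma leIl x y : x ⊓ y ≤ x.
Proof. by rewrite /ka_le ka_meetC ka_meetA meetxx. Qed.

Lemma leIr x y : x ⊓ y ≤ y.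
Proof. by rewrite /ka_le -ka_meetA meetxx. Qed.

Lemma lexI x y z : z ≤ x -> z ≤ y -> z ≤ x ⊓ y.
Proof. by rewrite /ka_le => zx zy; rewrite ka_meetA zx zy. Qed.

Lemma leI2 x y x' y' : x ≤ x' -> y ≤ y' -> x ⊓ y ≤ x' ⊓ y'.
Proof.
by move=> xx' yy'; apply: lexI; [apply: le_trans xx'; apply: leIl
                               | apply: le_trans yy'; apply: leIr].
Qed.

Lemma leUl x y : x ≤ x ⊔ y.
Proof. exact: ka_meetKU. Qed.

Lemma leUr x y : y ≤ x ⊔ y.
Proof. by rewrite ka_joinC; apply: leUl. Qed.

Lemma leUx x y z : x ≤ z -> y ≤ z -> x ⊔ y ≤ z.
Proof. by rewrite /ka_le meetUl => -> ->. Qed.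

End Lattice.

Lemma hom_id (A : KA) : is_hom (@id A).
Proof. by []. Qed.

Lemma hom_comp (A B C : KA) (f : A -> B) (h : B -> C) :
  is_hom f -> is_hom h -> is_hom (h \o f).
Proof.
move=> [fI [fU [f0 [f1 fN]]]] [hI [hU [h0 [h1 hN]]]].
by do ![split] => /= [x y|x y|||x]; rewrite ?fI ?fU ?f0 ?f1 ?fN ?hI ?hU ?h0 ?h1 ?hN.
Qed.

Definition subKA (A : KA) (P : A -> Prop) (closedP : ka_closed P) : KA.
Proof.
refine (@Build_KA (sig P)
  (fun u v => exist P (proj1_sig u ⊓ proj1_sig v) _)
  (fun u v => exist P (proj1_sig u ⊔ proj1_sig v) _)
  (exist P (ka_zero A) _) (exist P (ka_one A) _)
  (fun u => exist P (¬ proj1_sig u) _) _ _ _ _ _ _ _ _ _ _ _ _).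
all: move=> *; apply: eq_sig_hprop => [? ? ?|]; first exact: Prop_irrelevance.
- exact: ka_meetA.
- exact: ka_joinA.
- exact: ka_meetC.
- exact: ka_joinC.
- exact: ka_meetKU.
- exact: ka_joinKI.
- exact: ka_meetUr.
- exact: ka_join0.
- exact: ka_meet1.
- exact: ka_negK.
- exact: ka_meet_neg.
- exact: ka_kleene.
Unshelve.
all: case: closedP => closedI [closedU [closed0 [closed1 closedN]]].
- exact: closedI (proj2_sig u) (proj2_sig v).
- exact: closedU (proj2_sig u) (proj2_sig v).
- exact: closed0.
- exact: closed1.
- exact: closedN (proj2_sig u).
Defined.

Lemma proj1_sig_hom (A : KA) (P : A -> Prop) (closedP : ka_closed P) :
  is_hom (@proj1_sig A P : subKA closedP -> A).
Proof. by []. Qed.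

Lemma free_generated (X : Type) (F : KA) (g : X -> F) :
  is_free g -> generated_by (fun y => exists x, g x = y).
Proof.
move=> freeg P closedP genP y.
have [h [hom_h [hg _]]] :=
  freeg (subKA closedP) (fun x => exist P (g x) (genP _ (ex_intro _ x erefl))).
have [h0 [_ [_ uniq]]] := freeg F g.
have hom_valh : is_hom (@proj1_sig F P \o h) by exact: hom_comp hom_h (proj1_sig_hom closedP).
have Eid := uniq id (hom_id F) (fun=> erefl) y.
have Evalh := uniq _ hom_valh (fun x => congr1 _ (hg x)) y.
rewrite [y](etrans Eid (esym Evalh)).
exact: proj2_sig.
Qed.

Definition compatible_rel (B : KA) (R : B -> B -> Prop) : Prop :=
  [/\ forall x x' y y', R x x' -> R y y' -> R (x ⊓ y) (x' ⊓ y'),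
      forall x x' y y', R x x' -> R y y' -> R (x ⊔ y) (x' ⊔ y'),
      R (ka_zero B) (ka_zero B), R (ka_one B) (ka_one B) &
      forall x x', R x x' -> R (¬ x) (¬ x')].

Lemma generated_hom_rel (A B : KA) (G : A -> Prop) (R : B -> B -> Prop) (h1 h2 : A -> B) :
  generated_by G -> compatible_rel R -> is_hom h1 -> is_hom h2 ->
  (forall x, G x -> R (h1 x) (h2 x)) -> forall x, R (h1 x) (h2 x).
Proof.
move=> genG [RI RU R0 R1 RN] [h1I [h1U [h10 [h11 h1N]]]] [h2I [h2U [h20 [h21 h2N]]]].
apply: genG; do ![split] => [x y|x y|||x] /=;
  rewrite ?h1I ?h1U ?h10 ?h11 ?h1N ?h2I ?h2U ?h20 ?h21 ?h2N; auto.
Qed.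

Lemma generated_hom_eq (A B : KA) (G : A -> Prop) (h1 h2 : A -> B) :
  generated_by G -> is_hom h1 -> is_hom h2 ->
  (forall x, G x -> h1 x = h2 x) -> forall x, h1 x = h2 x.
Proof.
move=> genG; apply: generated_hom_rel genG _.
by split=> [x _ y _ <- <-|x _ y _ <- <-|||x _ <-].
Qed.

Inductive k3 : Type := K0 | Km | K1.

Definition k3meet (t u : k3) : k3 :=
  match t, u with
  | K0, _ | _, K0 => K0
  | K1, u => u
  | Km, _ => Km
  end.

Definition k3join (t u : k3) : k3 :=
  match t, u with
  | K1, _ | _, K1 => K1
  | K0, u => u
  | Km, _ => Km
  end.

Definition k3neg (t : k3) : k3 :=
  match t with K0 => K1 | Km => Km | K1 => K0 end.

Definition K3 : KA.
Proof.
refine (@Build_KA k3 k3meet k3join K0 K1 k3neg _ _ _ _ _ _ _ _ _ _ _ _);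
  abstract by do ![case].
Defined.

Definition info_le (t u : k3) : Prop :=
  match t, u with
  | Km, _ | K0, K0 | K1, K1 => True
  | _, _ => False
  end.

Lemma info_le_compatible : compatible_rel (B := K3) info_le.
Proof. by split; do ?case. Qed.

Lemma info_le_Km (t : k3) : info_le t Km -> t = Km.
Proof. by case: t. Qed.

Definition crisp (b : bool) : k3 := if b then K1 else K0.

Lemma info_le_crisp_eq (b : bool) (u : k3) : info_le (crisp b) u -> u = crisp b.
Proof. by case: b; case: u. Qed.

Definition is_K1 (t : k3) : bool := if t is K1 then true else false.

Lemma info_le_crisp (t : k3) : info_le t (crisp (is_K1 t)).
Proof. by case: t. Qed.

(* K3 as the pairs [q ==> r] of booleans: [q] tests for K1, [r] for differing from K0. *)
Definition k3_of (q r : bool) : k3 := if q then K1 else if r then Km else K0.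

Lemma k3_ofI (q r q' r' : bool) : q ==> r -> q' ==> r' ->
  k3meet (k3_of q r) (k3_of q' r') = k3_of (q && q') (r && r').
Proof. by case: q; case: r; case: q'; case: r'. Qed.

Lemma k3_ofU (q r q' r' : bool) : q ==> r -> q' ==> r' ->
  k3join (k3_of q r) (k3_of q' r') = k3_of (q || q') (r || r').
Proof. by case: q; case: r; case: q'; case: r'. Qed.

Lemma k3_ofN (q r : bool) : q ==> r -> k3neg (k3_of q r) = k3_of (~~ r) (~~ q).
Proof. by case: q; case: r. Qed.

Lemma k3_of_inj (q r q' r' : bool) : q ==> r -> q' ==> r' ->
  k3_of q r = k3_of q' r' -> q = q' /\ r = r'.
Proof. by case: q; case: r; case: q'; case: r'. Qed.

(* Prime filters are represented by their characteristic functions, i.e. as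
   bounded-lattice homomorphisms to bool. *)
Definition prime_filter (A : KA) (p : A -> bool) : Prop :=
  [/\ {morph p : x y / x ⊓ y >-> x && y}, {morph p : x y / x ⊔ y >-> x || y},
      p (ka_zero A) = false & p (ka_one A) = true].

Definition dual_filter (A : KA) (p : A -> bool) (x : A) : bool := ~~ p (¬ x).

Section PrimeFilter.
Variables (A : KA) (p : A -> bool).
Hypothesis p_prime : prime_filter p.

Lemma prime_filter_mono (x y : A) : x ≤ y -> p x -> p y.
Proof. by case: p_prime => pI _ _ _ xy; rewrite -xy pI => /andP[]. Qed.

Lemma dual_prime_filter : prime_filter (dual_filter p).
Proof.
case: p_prime => pI pU p0 p1; rewrite /dual_filter.
split=> [x y|x y||]; first by rewrite negI pU negb_or.
- by rewrite negU pI negb_and.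
- by rewrite neg0 p1.
- by rewrite neg1 p0.
Qed.

Lemma dual_filter_comparable :
  (forall x, p x ==> dual_filter p x) \/ (forall x, dual_filter p x ==> p x).
Proof.
case: p_prime => pI pU _ _; rewrite /dual_filter.
apply: contrapT => /not_orP[]; rewrite -!existsNE => -[a /negP aN] [b /negP bN].
move: aN bN; rewrite negb_imply negbK negb_imply => /andP[pa pna] /andP[pnb nb].
have : p (b ⊔ ¬ b) by apply: prime_filter_mono (ka_kleene a b) _; rewrite pI pa pna.
by rewrite pU (negbTE pnb) (negbTE nb).
Qed.

End PrimeFilter.

Lemma k3_of_hom (A : KA) (q r : A -> bool) :
  prime_filter q -> prime_filter r -> (forall x, q x ==> r x) ->
  (forall x, q (¬ x) = ~~ r x) -> is_hom (fun x => k3_of (q x) (r x) : K3).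
Proof.
move=> [qI qU q0 q1] [rI rU r0 r1] qr qN.
have rN x : r (¬ x) = ~~ q x by rewrite -[in q x](ka_negK x) qN negbK.
do ![split] => [x y|x y|||x] /=.
- by rewrite qI rI k3_ofI.
- by rewrite qU rU k3_ofU.
- by rewrite q0 r0.
- by rewrite q1 r1.
- by rewrite qN rN k3_ofN.
Qed.

Definition ka_filter (A : KA) (B : set A) : Prop :=
  (forall x y, B x -> x ≤ y -> B y) /\ (forall x y, B x -> B y -> B (x ⊓ y)).

Section PrimeFilterTheorem.
Variables (A : KA) (y1 y2 : A).
Hypothesis y1_not_le_y2 : ~ y1 ≤ y2.

Local Open Scope classical_set_scope.

(* Asking for [y1] only in nonempty sets makes the union of the empty chain a
   candidate as well. *)
Let candidate (B : set A) : Prop := [/\ ka_filter B, ~ B y2 & B !=set0 -> B y1].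

Let extension (M : set A) (p : A) : set A := [set z | exists2 m, M m & m ⊓ p ≤ z].

Let chain_candidate (C : set (set A)) :
  C `<=` candidate -> total_on C subset -> candidate (\bigcup_(X in C) X).
Proof.
move=> Ccand Ctot; split.
- split=> [x y [X CX Xx] xy|x y [X CX Xx] [Y CY Yy]].
    by exists X => //; have [[Xup _] _ _] := Ccand X CX; apply: Xup xy.
  have [XY|YX] := Ctot X Y CX CY.
    by exists Y => //; have [[_ Ymeet] _ _] := Ccand Y CY; apply: Ymeet (XY _ Xx) Yy.
  by exists X => //; have [[_ Xmeet] _ _] := Ccand X CX; apply: Xmeet Xx (YX _ Yy).
- by move=> [X CX Xy2]; have [_ + _] := Ccand X CX; apply.
- by move=> [z [X CX Xz]]; exists X => //; have [_ _ +] := Ccand X CX; apply; exists z.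
Qed.

Let principal_candidate : candidate [set z | y1 ≤ z].
Proof.
split=> //; last by move=> _; apply: le_refl.
by split=> [x y|x y]; [apply: le_trans | apply: lexI].
Qed.

Let extension_filter (M : set A) (p : A) : ka_filter M -> ka_filter (extension M p).
Proof.
move=> [_ Mmeet]; split=> [x y [m Mm mx] xy|x y [m Mm mx] [m' Mm' my]].
  by exists m => //; apply: le_trans xy.
exists (m ⊓ m'); first exact: Mmeet.
apply: le_trans (leI2 mx my); apply: lexI; apply: leI2 (le_refl _);
  [apply: leIl | apply: leIr].
Qed.

Lemma exists_prime_filter :
  exists2 p : A -> bool, prime_filter p & p y1 && ~~ p y2.
Proof.
have [M [[[Mup Mmeet] My2 My1] Mmax]] := Zorn_bigcup chain_candidate.
have {}My1 : M y1.
  apply: contrapT => My1N; apply: (Mmax _ _ principal_candidate); split.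
    by move=> z Mz; apply: contrapT => _; apply/My1N/My1; exists z.
  by move=> /(_ y1 (le_refl _)).
have extension_y2 x : ~ M x -> extension M x y2.
  move=> MxN; apply: contrapT => Ey2N; apply: (Mmax (extension M x)).
    split=> [m Mm|/(_ x)]; first by exists m => //; apply: leIl.
    by apply: contra_not MxN; apply; exists y1 => //; apply: leIr.
  split=> //; first exact: extension_filter.
  by move=> _; exists y1 => //; apply: leIl.
have Mprime x y : M (x ⊔ y) -> M x \/ M y.
  move=> Mxy; apply: contrapT => /not_orP[/extension_y2[m Mm mx] /extension_y2[m' Mm' my]].
  apply/My2/(Mup _ _ (Mmeet _ _ (Mmeet _ _ Mm Mm') Mxy)).
  rewrite ka_meetUr; apply: leUx.
    by apply: le_trans mx; apply: leI2 (leIl _ _) (le_refl _).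
  by apply: le_trans my; apply: leI2 (leIr _ _) (le_refl _).
exists (fun z => `[< M z >]); last by apply/andP; split; apply/asboolP.
split=> [x y|x y||].
- rewrite -asbool_and; apply: asbool_equiv_eq; split=> [Mxy|[]]; last exact: Mmeet.
  by split; apply: Mup Mxy _; [apply: leIl | apply: leIr].
- rewrite -asbool_or; apply: asbool_equiv_eq; split; first exact: Mprime.
  by case=> [Mx|My]; [apply: Mup Mx _; apply: leUl | apply: Mup My _; apply: leUr].
- by apply/asboolF => M0; apply/My2/(Mup _ _ M0)/le0x.
- by apply/asboolT/(Mup _ _ My1)/lex1.
Qed.

End PrimeFilterTheorem.

Lemma exists_K3_hom_neq (A : KA) (x y : A) :
  ~ x ≤ y -> exists2 k : A -> K3, is_hom k & k x <> k y.
Proof.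
case/exists_prime_filter => p p_prime /andP[px npy].
have pd_prime := dual_prime_filter p_prime.
have [le_p_pd|le_pd_p] := dual_filter_comparable p_prime.
- exists (fun z => k3_of (p z) (dual_filter p z)).
    by apply: k3_of_hom => // z; rewrite /dual_filter negbK.
  by move/(k3_of_inj (le_p_pd x) (le_p_pd y)) => [pxy _]; move: npy; rewrite -pxy px.
- exists (fun z => k3_of (dual_filter p z) (p z)).
    by apply: k3_of_hom => // z; rewrite /dual_filter ka_negK.
  by move/(k3_of_inj (le_pd_p x) (le_pd_p y)) => [_ pxy]; move: npy; rewrite -pxy px.
Qed.

Lemma K3_separates (A : KA) (x y : A) :
  (forall k : A -> K3, is_hom k -> k x = k y) -> x = y.
Proof.
move=> sep; apply: le_anti; apply: contrapT => /exists_K3_hom_neq[k hk]; apply.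
  exact: sep.
exact/esym/sep.
Qed.

Definition unary_term (A : KA) (b0 b1 : bool) (a : A) : A :=
  match b0, b1 with
  | true, true => a ⊔ ¬ a
  | true, false => ¬ a
  | false, true => a
  | false, false => a ⊓ ¬ a
  end.

Definition k3_term (b0 b1 : bool) (t : k3) : k3 :=
  match t with K0 => crisp b0 | Km => Km | K1 => crisp b1 end.

Lemma hom_unary_term (A : KA) (h : A -> K3) (b0 b1 : bool) (a : A) :
  is_hom h -> h (unary_term b0 b1 a) = k3_term b0 b1 (h a).
Proof.
case=> hI [hU [_ [_ hN]]].
by case: b0; case: b1; rewrite /= ?hI ?hU ?hN; case: (h a).
Qed.

Section FreeAlgebra.
Variables (X : Type) (F : KA) (g : X -> F).
Hypothesis freeg : is_free g.

Lemma free_hom_info_le (k k' : F -> K3) : is_hom k -> is_hom k' ->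
  (forall x, info_le (k (g x)) (k' (g x))) -> forall y, info_le (k y) (k' y).
Proof.
move=> hk hk' kk'; apply: generated_hom_rel (free_generated freeg) info_le_compatible hk hk' _.
by move=> _ [x <-].
Qed.

Lemma exists_crisp_pattern (w : F) (c : bool) :
  exists b : X -> bool, forall k k' : F -> K3, is_hom k -> is_hom k' ->
    k w = crisp c -> (forall x, k' (g x) = crisp (b x)) -> k' w = crisp c.
Proof.
have [[k0 [hk0 k0w]]|none] := pselect (exists k : F -> K3, is_hom k /\ k w = crisp c).
  exists (fun x => is_K1 (k0 (g x))) => k k' _ hk' _ k'g.
  apply: info_le_crisp_eq; rewrite -k0w.
  by apply: (free_hom_info_le hk0 hk') => x; rewrite k'g; apply: info_le_crisp.
by exists (fun=> false) => k k' hk _ kw; case: none; exists k.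
Qed.

Lemma free_left_inverse_at (S : KA) (a : S) (phi : S -> F) :
  is_embedding phi -> exists2 J : F -> S, is_hom J & J (phi a) = a.
Proof.
move=> [hphi phi_inj].
have [b0 b0P] := exists_crisp_pattern (phi a) false.
have [b1 b1P] := exists_crisp_pattern (phi a) true.
have [J [hJ [Jg _]]] := @freeg S (fun x => unary_term (b0 x) (b1 x) a).
exists J => //; apply: phi_inj; apply: K3_separates => k hk.
have hkphi := hom_comp hphi hk.
have [kt [hkt [ktg _]]] := @freeg K3 (fun x => k3_term (b0 x) (b1 x) (k (phi a))).
have -> : k (phi (J (phi a))) = kt (phi a).
  apply: generated_hom_eq (free_generated freeg) (hom_comp hJ hkphi) hkt _ _.
  by move=> _ [x <-]; rewrite /= Jg ktg; apply: (hom_unary_term _ _ _ hkphi).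
case Et: (k (phi a)) ktg => ktg.
- by apply: b0P hk hkt Et _ => x; rewrite ktg.
- apply: info_le_Km; rewrite -Et; apply: (free_hom_info_le hkt hk) => x.
  by rewrite ktg.
- by apply: b1P hk hkt Et _ => x; rewrite ktg.
Qed.

End FreeAlgebra.

Lemma free_projective (X : Type) (F : KA) (g : X -> F) : is_free g -> projective F.
Proof. by move=> freeg; exists X, F, g; split => //; exists id, id. Qed.

Lemma embedding_into_projective_splits (S : KA) (a : S) :
  generated_by (fun x => x = a) ->
  forall (P : KA) (i : S -> P), projective P -> is_embedding i ->
    exists j : P -> S, is_hom j /\ forall s, j (i s) = s.
Proof.
move=> gen P i [X [F [g [freeg [s [r [hs [_ rs]]]]]]]] [hi i_inj].
have si_emb : is_embedding (s \o i).
  by split; [exact: hom_comp hi hs | exact/inj_comp/i_inj/can_inj/rs].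
have [J hJ Ja] := free_left_inverse_at freeg a si_emb.
exists (J \o s); split; first exact: hom_comp hs hJ.
by apply: generated_hom_eq gen (hom_comp hi (hom_comp hs hJ)) (hom_id S) _ => _ ->.
Qed.

Theorem theorem5p8 :
  forall S : KA, one_generated S -> exact S -> strongly_projective S.
Proof.
move=> S [a gen] [_ [n [F [g [e [freeg e_emb]]]]]].
split; last exact: embedding_into_projective_splits gen.
have [j [hj je]] := embedding_into_projective_splits gen (free_projective freeg) e_emb.
by exists 'I_n, F, g; split => //; exists e, j; split => //; case: e_emb.
Qed.
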